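(* Maximal matching can be solved by a deterministic LOCAL algorithm in $O(\log n/\log\log n)$ rounds on $n$-node trees.
   Context: A maximal matching of a graph is a set of pairwise non-adjacent edges such that every edge of the graph shares an endpoint with some edge of the set. LOCAL model: nodes have unique IDs from $\{1,\dots,n^c\}$, know $n$, have unbounded computation, and communicate with neighbors in synchronous rounds with unbounded messages. *)

From mathcomp Require Import all_boot finmap.
Set Implicit Arguments. Unset Strict Implicit. Unset Printing Implicit Defensive.


Definition simple_graph (V : finType) (e : rel V) : Prop :=
  symmetric e /\ irreflexive e.

Definition is_tree (V : finType) (e : rel V) : Prop :=
  simple_graph e /\ (forall u w : V, connect e u w) /\
  (forall s : seq V, uniq s -> 2 < size s -> ~~ cycle e s).

Definition edges (V : finType) (e : rel V) : {set {set V}} :=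
  [set f : {set V} | [exists u, exists w, e u w && (f == [set u; w])]].

Definition is_matching (V : finType) (e : rel V) (M : {set {set V}}) : Prop :=
  M \subset edges e /\
  (forall f g, f \in M -> g \in M -> f != g -> [disjoint f & g]).

Definition is_maximal_matching (V : finType) (e : rel V) (M : {set {set V}}) : Prop :=
  is_matching e M /\
  (forall f, f \in edges e -> exists2 g, g \in M & ~~ [disjoint f & g]).

Fixpoint ball (V : finType) (e : rel V) (k : nat) (v : V) : {set V} :=
  if k is k'.+1 then
    let B := ball e k' v in B :|: [set w | [exists u in B, e u w]]
  else [set v].

(** The radius-T view of v in the LOCAL model: the ID of v together with the
    subgraph induced by the radius-T ball, labelled by the unique IDs.
    Since IDs are unique, this ID-labelled graph is represented canonically by
    finite sets of naturals. *)
Definition view := (nat * {fset nat} * {fset (nat * nat)})%type.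

Definition view_of (V : finType) (e : rel V) (idf : V -> nat) (T : nat) (v : V) : view :=
  let B := enum (ball e T v) in
  (idf v,
   [fset idf u | u in B]%fset,
   [fset (idf p.1, idf p.2) | p in [seq p <- [seq (x, y) | x <- B, y <- B] | e p.1 p.2]]%fset).

(** A deterministic T-round LOCAL algorithm (knowing n) is a map from
    (n, radius-T view) to an output. Output of node v: [Some id] = the ID of the
    neighbour v is matched to, [None] = unmatched. *)
Definition local_output (V : finType) (e : rel V) (idf : V -> nat) (n T : nat)
  (A : nat -> view -> option nat) (v : V) : option nat := A n (view_of e idf T v).

Definition output_matching (V : finType) (e : rel V) (idf : V -> nat)
  (out : V -> option nat) : {set {set V}} :=
  [set f : {set V} | [exists u, exists w,
     [&& e u w, out u == Some (idf w), out w == Some (idf u) & f == [set u; w]]]].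

Definition solves_maximal_matching (V : finType) (e : rel V) (idf : V -> nat)
  (out : V -> option nat) : Prop :=
  (forall v x, out v = Some x ->
     exists w, [/\ e v w, idf w = x & out w = Some (idf v)]) /\
  is_maximal_matching e (output_matching e idf out).

Definition valid_ids (n c : nat) (V : finType) (idf : V -> nat) : Prop :=
  injective idf /\ (forall v, 1 <= idf v <= n ^ c).

(* Peel the tree: during [l] rounds, every remaining node with at most
   [t = 2^h - 1] remaining neighbours leaves, the round being its layer.  In a
   forest the degrees sum to less than twice the number of nodes, so each round
   keeps at most a [2^(1-h)] fraction of the nodes, and [l ~ log n / (h - 1)]
   rounds peel everything.  Orienting every edge towards the endpoint with the
   larger (layer, ID) leaves each node with at most [t] parents; for each
   [j < t] the edges to [j]-th parents form a pseudoforest, which two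
   Cole-Vishkin steps colour properly with [O(log log n)] colours starting from
   the [O(log n)]-bit IDs.  Then one two-round phase per pair (index [j],
   colour [c]): unmatched children of colour [c] propose to their [j]-th
   parent, which accepts one of them if it is unmatched.  Properness makes
   proposers and acceptors disjoint, so the result stays a matching, and after
   the phase of an edge one of its endpoints is matched.  With
   [h ~ (log log n) / 2] both the peeling and the [O(2^h log log n)] phase
   rounds are [O(log n / log log n)].  Finally, after [r] rounds the state of a
   node depends only on its radius-[r] ball, so the synchronous algorithm is a
   LOCAL algorithm reading radius-[T] views. *)

From mathcomp Require Import all_boot zify finmap.
From Stdlib Require Import FunctionalExtensionality.

Set Implicit Arguments. Unset Strict Implicit. Unset Printing Implicit Defensive.

(** * Degrees in forests *)

Section ForestDegrees.
Variables (V : finType) (e : rel V).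
Hypothesis e_sym : symmetric e.
Hypothesis e_irr : irreflexive e.
Hypothesis e_acyclic : forall s : seq V, uniq s -> 2 < size s -> ~~ cycle e s.

Definition deg (S : {set V}) x := #|[set y in S | e x y]|.

Lemma acyclic_nbr_on_path x0 s y : path e x0 s -> uniq (x0 :: s) -> e x0 y ->
  y \in s -> y = head x0 s.
Proof.
move=> ps us exy ys.
have jlt : index y s < size s by rewrite index_mem.
case Ej: (index y s) => [|j].
  by case: s ps us ys jlt Ej => //= z s' _ _ _ _; case: ifP => // /eqP.
have cyc_uniq : uniq (x0 :: take j.+2 s) by have := take_uniq j.+3 us.
have cyc_size : 2 < size (x0 :: take j.+2 s) by rewrite /= size_takel // -Ej.
case/negP: (e_acyclic cyc_uniq cyc_size).
rewrite /cycle rcons_path; apply/andP; split.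
  by move: ps; rewrite -{1}(cat_take_drop j.+2 s) cat_path => /andP[].
by rewrite (last_nth x0) /= size_takel -?Ej // /= nth_take // nth_index // e_sym.
Qed.

Lemma min_deg2_long_path (S : {set V}) a : a \in S ->
  (forall x, x \in S -> 1 < deg S x) ->
  forall k, exists x0 s,
    [/\ path e x0 s, uniq (x0 :: s), all (mem S) (x0 :: s) & size s = k].
Proof.
move=> aS hdeg; elim=> [|k [x0 [s [ps us sS sk]]]].
  by exists a, [::]; rewrite /= aS.
have x0S : x0 \in S by case/andP: sS.
have /card_gt1P [b [c [bN cN bc]]] := hdeg _ x0S.
set y := if b == head x0 s then c else b.
have yN : y \in [set z in S | e x0 z] by rewrite /y; case: ifP.
have yh : y != head x0 s.
  by rewrite /y; case: ifP => [/eqP <-|/negbT //]; rewrite eq_sym.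
move: yN; rewrite inE => /andP[yS ey].
exists y, (x0 :: s); split => //=.
- by rewrite e_sym ey.
- have /= -> := us; rewrite andbT inE negb_or; apply/andP; split.
    by apply/negP => /eqP yx; move: ey; rewrite yx e_irr.
  by apply: contra yh => ys; apply/eqP; exact: acyclic_nbr_on_path ps us ey ys.
- by move: sS => /= ->; rewrite yS.
- by rewrite sk.
Qed.

Lemma exists_low_deg (S : {set V}) : S != set0 -> exists2 x, x \in S & deg S x <= 1.
Proof.
case/set0Pn => a aS.
case: (boolP [forall x, (x \in S) ==> (1 < deg S x)]) => [/forallP H|]; last first.
  by rewrite negb_forall => /existsP [x]; rewrite negb_imply -leqNgt => /andP[]; exists x.
have [x0 [s [_ us sS sk]]] := min_deg2_long_path aS (fun x => implyP (H x)) #|S|.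
have : size (x0 :: s) <= #|S|.
  rewrite cardE; apply: uniq_leq_size => // z zs.
  by rewrite mem_enum; exact: (allP sS).
by rewrite /= sk ltnn.
Qed.

Lemma sum_deg_le (S : {set V}) : \sum_(x in S) deg S x <= 2 * #|S|.
Proof.
have [m] := ubnP #|S|; elim: m S => // m IH S; rewrite ltnS => Sm.
have [->|Sn0] := eqVneq S set0; first by rewrite big_set0.
have [x xS dx] := exists_low_deg Sn0.
have cS := cardsD1 x S; rewrite xS in cS.
rewrite (big_setD1 _ xS) /=.
have deg_split y : y \in S :\ x -> deg S y = (e y x : nat) + deg (S :\ x) y.
  move=> yS'; rewrite /deg (cardsD1 x) inE xS.
  suff -> : [set z in S | e y z] :\ x = [set z in S :\ x | e y z] by [].
  by apply/setP => z; rewrite !inE; case: (z == x).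
rewrite (eq_bigr _ deg_split) big_split /=.
have nbrs_x : \sum_(y in S :\ x) (e y x : nat) <= 1.
  rewrite -big_mkcondr /= sum_nat_cond_const muln1.
  apply: leq_trans dx; apply: subset_leq_card; apply/subsetP => z.
  by rewrite !inE e_sym => /andP[/andP[_ ->] ->].
have := IH (S :\ x); rewrite cS add1n in Sm * => /(_ Sm).
by move: dx nbrs_x; lia.
Qed.

Lemma card_high_deg (S : {set V}) t :
  #|[set x in S | t < deg S x]| * t.+1 <= 2 * #|S|.
Proof.
apply: leq_trans _ (sum_deg_le S).
rewrite -sum_nat_const [X in _ <= X](bigID (fun x => t < deg S x)) /=.
apply: leq_trans (leq_addr _ _).
rewrite (eq_bigl (fun x => (x \in S) && (t < deg S x))); last by move=> z; rewrite inE.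
by apply: leq_sum => i /andP[].
Qed.
End ForestDegrees.

Section OutputMatching.
Variables (V : finType) (e : rel V) (idf : V -> nat) (out : V -> option nat).
Hypothesis idf_inj : injective idf.
Hypothesis out_sym : forall v x, out v = Some x ->
  exists w, [/\ e v w, idf w = x & out w = Some (idf v)].

Lemma output_matching_at f x : f \in output_matching e idf out -> x \in f ->
  exists y, out x = Some (idf y) /\ f = [set x; y].
Proof.
rewrite inE => /existsP [u] /existsP [w] /and4P [_ /eqP ou /eqP ow /eqP ->].
by rewrite !inE => /orP[] /eqP ->; [exists w | exists u; rewrite setUC].
Qed.

Lemma output_matching_is_matching : is_matching e (output_matching e idf out).
Proof.
split.
  apply/subsetP => f; rewrite !inE => /existsP [u] /existsP [w] /and4P [euw _ _ fE].
  by apply/existsP; exists u; apply/existsP; exists w; rewrite euw.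
move=> f g fM gM; apply: contraR => /pred0Pn [x /andP [xf xg]].
have [y [oy ->]] := output_matching_at fM xf.
have [y' [oy' ->]] := output_matching_at gM xg.
by move: oy'; rewrite oy => -[/idf_inj ->].
Qed.

Lemma output_matching_cover x : out x != None ->
  exists2 g, g \in output_matching e idf out & x \in g.
Proof.
case E: (out x) => [k|] // _; have [y [exy ky oy]] := out_sym E.
exists [set x; y]; last by rewrite !inE eqxx.
rewrite inE; apply/existsP; exists x; apply/existsP; exists y.
by rewrite exy E ky oy !eqxx.
Qed.

Lemma solves_maximal_matchingP :
  (forall u w, e u w -> out u != None \/ out w != None) ->
  solves_maximal_matching e idf out.
Proof.
move=> cov; split=> //; split; first exact: output_matching_is_matching.
move=> f; rewrite inE => /existsP [u] /existsP [w] /andP[euw /eqP ->].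
have [x xf ox] : exists2 x, x \in [set u; w] & out x != None.
  by case: (cov u w euw) => o; [exists u | exists w]; rewrite // !inE eqxx ?orbT.
have [g gM xg] := output_matching_cover ox.
by exists g => //; apply/pred0Pn; exists x; rewrite /= xf xg.
Qed.
End OutputMatching.

(** * Cole-Vishkin colour reduction *)

Fixpoint bit i a := if i is i'.+1 then bit i' a./2 else odd a.

Fixpoint diff_bit f a b :=
  if f is f'.+1 then (if odd a != odd b then 0 else (diff_bit f' a./2 b./2).+1)
  else 0.

(* A node of colour [a] whose parent has colour [b] takes as new colour the
   position [i] of the lowest bit where [a] and [b] differ, together with its
   own bit there: [k]-bit colours become colours below [2 k], and the new
   colours of a node and of its parent still differ (by [i] or by that bit). *)
Definition cv_recolour f a b := 2 * diff_bit f a b + bit (diff_bit f a b) a.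

Lemma diff_bitP f k a b : k <= f -> a < 2 ^ k -> b < 2 ^ k -> a != b ->
  diff_bit f a b < k /\ bit (diff_bit f a b) a != bit (diff_bit f a b) b.
Proof.
elim: f k a b => [|f IH] k a b.
  by rewrite leqn0 => /eqP -> /=; rewrite !ltnS !leqn0 => /eqP -> /eqP ->.
case: k => [|k] kf.
  by rewrite !expn0 !ltnS !leqn0 => /eqP -> /eqP ->.
move=> ak bk ab /=; case: ifP => [od|/negbFE/eqP od]; first by split.
have ak' : a./2 < 2 ^ k by rewrite ltn_half_double -muln2 -expnSr.
have bk' : b./2 < 2 ^ k by rewrite ltn_half_double -muln2 -expnSr.
have ab' : a./2 != b./2.
  apply: contra ab => /eqP E; apply/eqP.
  by rewrite -(odd_double_half a) -(odd_double_half b) od E.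
by have [] := IH k _ _ kf ak' bk' ab'.
Qed.

Lemma cv_recolour_lt f k a b : k <= f -> a < 2 ^ k -> b < 2 ^ k -> a != b ->
  cv_recolour f a b < 2 * k.
Proof.
move=> kf ak bk ab; have [H _] := diff_bitP kf ak bk ab.
rewrite /cv_recolour; case: (bit _ _) => /=; lia.
Qed.

Lemma double_bit_inj i j (x y : bool) : 2 * i + x = 2 * j + y -> i = j /\ x = y.
Proof.
move=> E; have Ex : x = y.
  have := congr1 odd E; rewrite !oddD.
  by clear E; case: x; case: y; case: (odd i); case: (odd j).
split=> //; rewrite Ex in E; lia.
Qed.

Lemma cv_recolour_neq f k a b i : k <= f -> a < 2 ^ k -> b < 2 ^ k -> a != b ->
  cv_recolour f a b != 2 * i + bit i b.
Proof.
move=> kf ak bk ab; have [_ H] := diff_bitP kf ak bk ab.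
by apply/eqP => /double_bit_inj [Ei Eb]; move: H; rewrite Eb Ei eqxx.
Qed.

(** * Synchronous rounds and locality *)

Section Rounds.
Local Open Scope fset_scope.
Variables (S : Type) (init : nat -> S).
(* [step r x s ids nb]: the new state, after round [r], of the node with ID [x]
   and state [s] whose neighbours have IDs [ids] and states [nb k] (by ID). *)
Variable step : nat -> nat -> S -> {fset nat} -> (nat -> option S) -> S.
Variables (X : choiceType) (idx : X -> nat) (nbrs : X -> seq X).

Definition nbr_ids x : {fset nat} := [fset idx w | w in nbrs x].
Definition nbr_state (st : X -> S) x k : option S :=
  omap st (ohead [seq w <- nbrs x | idx w == k]).

Fixpoint run r : X -> S :=
  if r is r'.+1 then fun x => step r' (idx x) (run r' x) (nbr_ids x) (nbr_state (run r') x)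
  else fun x => init (idx x).
End Rounds.

Lemma ohead_filter_some (T : eqType) (p : pred T) s x :
  ohead [seq y <- s | p y] = Some x -> (x \in s) && p x.
Proof.
elim: s => //= y s IH; case: ifP => [py [<-]|_ /IH]; first by rewrite inE eqxx py.
by rewrite inE => /andP[-> ->]; rewrite orbT.
Qed.

Lemma ohead_filter_none (T : eqType) (p : pred T) s :
  ohead [seq y <- s | p y] = None -> ~~ has p s.
Proof. by elim: s => //= y s IH; case: ifP. Qed.

Lemma ball_mono (V : finType) (e : rel V) v k k' : k <= k' ->
  ball e k v \subset ball e k' v.
Proof.
move=> /subnK <-; elim: (k' - k) => //= m IH.
by apply: subset_trans IH _; rewrite subsetUl.
Qed.

Lemma ball_nbr (V : finType) (e : rel V) v k u w :
  u \in ball e k v -> e u w -> w \in ball e k.+1 v.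
Proof.
move=> uB euw /=; rewrite in_setU; apply/orP; right.
by rewrite inE; apply/existsP; exists u; rewrite uB.
Qed.

Definition graph_nbrs (V : finType) (e : rel V) (u : V) : seq V :=
  [seq w <- enum V | e u w].
Definition view_nbrs (E : {fset (nat * nat)}) (k : nat) : seq nat :=
  [seq p.2 | p <- E & p.1 == k].

Section Locality.
Local Open Scope fset_scope.
Variables (S : Type) (init : nat -> S).
Variable step : nat -> nat -> S -> {fset nat} -> (nat -> option S) -> S.
Variables (V : finType) (e : rel V) (idf : V -> nat).
Variables (E : {fset (nat * nat)}) (T : nat) (v : V).
Hypothesis idf_inj : injective idf.
Hypothesis E_ball : forall a b, (a, b) \in E <->
  exists x y, [/\ x \in ball e T v, y \in ball e T v, e x y, idf x = a & idf y = b].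

Lemma run_view r : r <= T -> forall u, u \in ball e (T - r) v ->
  run init step idf (graph_nbrs e) r u = run init step id (view_nbrs E) r (idf u).
Proof.
elim: r => [|r IH] rT u uB //=.
have T0 : 0 < T by apply: leq_trans rT.
have uB1 : u \in ball e (T - r) v.
  by apply: (subsetP (ball_mono _ _ _)) uB; rewrite leq_sub2l.
have uBT : u \in ball e T v by apply: (subsetP (ball_mono _ _ _)) uB; rewrite leq_subr.
have nbB w : e u w -> w \in ball e (T - r) v.
  by move=> euw; have := ball_nbr uB euw; rewrite subnS prednK // subn_gt0.
have nbBT w : e u w -> w \in ball e T v.
  by move/nbB; apply: (subsetP (ball_mono _ _ _)); rewrite leq_subr.
have mem_view k : (k \in view_nbrs E (idf u)) = has (fun w => idf w == k) (graph_nbrs e u).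
  apply/idP/idP.
  - case/mapP => -[a b]; rewrite mem_filter => /andP[/eqP /= -> /E_ball] + -> /=.
    case=> x [y [_ _ exy /idf_inj xu <-]]; subst x.
    by apply/hasP; exists y; rewrite // /graph_nbrs mem_filter mem_enum exy.
  - case/hasP => w; rewrite /graph_nbrs mem_filter mem_enum andbT => euw /eqP <-.
    apply/mapP; exists (idf u, idf w) => //; rewrite mem_filter /= eqxx /=.
    by apply/E_ball; exists u, w; split=> //; exact: nbBT.
rewrite (IH (ltnW rT) u uB1); congr step.
  apply/fsetP => k; apply/imfsetP/imfsetP => /= [[w wN ->]|[k' kN ->]].
    by exists (idf w) => //; rewrite mem_view; apply/hasP; exists w.
  by move: kN; rewrite mem_view => /hasP [w ? /eqP <-]; exists w.
apply: functional_extensionality => k; rewrite /nbr_state.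
case E1: (ohead [seq w <- graph_nbrs e u | idf w == k]) => [w|] /=.
  move: (ohead_filter_some E1) => /andP[wN /eqP wk].
  have kin : k \in view_nbrs E (idf u) by rewrite mem_view; apply/hasP; exists w; rewrite ?wk.
  case E2: (ohead [seq w <- view_nbrs E (idf u) | id w == k]) => [k'|].
    move: (ohead_filter_some E2) => /andP[_ /eqP ->] /=; rewrite -wk.
    by rewrite (IH (ltnW rT) w) //; apply: nbB; move: wN; rewrite mem_filter => /andP[].
  by move/ohead_filter_none: E2 => /hasP []; exists k.
case E2: (ohead [seq w <- view_nbrs E (idf u) | id w == k]) => [k'|] //=.
move: (ohead_filter_some E2) => /andP[kN /eqP kk].
move/ohead_filter_none: E1 => /hasP []; move: kN; rewrite kk mem_view => /hasP [w ? ?].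
by exists w.
Qed.
End Locality.

Lemma view_edgesP (V : finType) (e : rel V) (idf : V -> nat) T v a b :
  (a, b) \in (view_of e idf T v).2 <->
  exists x y, [/\ x \in ball e T v, y \in ball e T v, e x y, idf x = a & idf y = b].
Proof.
rewrite /view_of /=; split.
  case/imfsetP => p; rewrite mem_filter => /andP[ep /allpairsP [[x y] [xB yB E]]] [-> ->].
  rewrite E /= in ep *; rewrite /= mem_enum in xB; rewrite /= mem_enum in yB.
  by exists x, y.
case=> x [y [xB yB exy <- <-]]; apply/imfsetP; exists (x, y); last by [].
rewrite mem_filter exy; apply/allpairsP; exists (x, y); rewrite /= !mem_enum.
by split.
Qed.

Lemma run_view_of (S : Type) (init : nat -> S) step (V : finType) (e : rel V)
    (idf : V -> nat) T v : injective idf ->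
  run init step id (view_nbrs (view_of e idf T v).2) T (view_of e idf T v).1.1 =
  run init step idf (graph_nbrs e) T v.
Proof.
move=> idf_inj; have := run_view init step idf_inj (view_edgesP e idf T v) (leqnn T) (u := v).
by rewrite subnn inE eqxx => /(_ isT) ->.
Qed.

(* [layer]: the round in which the node was peeled off; [parents]: the IDs of
   its parents, the [j]-th parent at index [j]; [colour j]: its colour in the
   pseudoforest formed by the edges to [j]-th parents; [mate]: its partner. *)
Record node_state := NodeState {
  layer : option nat; parents : seq nat; colour : nat -> nat; mate : option nat }.

Definition parent_at (s : node_state) j : option nat :=
  if j < size (parents s) then Some (nth 0 (parents s) j) else None.

Definition unpeeled_state (o : option node_state) :=
  if o is Some s then layer s == None else false.

Definition key_lt a ia b ib := (a < b) || ((a == b) && (ia < ib)).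

Definition above x (sx : node_state) k (o : option node_state) :=
  if o is Some s then key_lt (odflt 0 (layer sx)) x (odflt 0 (layer s)) k else false.

Definition proposes x j c (o : option node_state) :=
  if o is Some s then [&& mate s == None, parent_at s j == Some x & colour s j == c]
  else false.

Section Algorithm.
Local Open Scope fset_scope.
Variables (t l fuel : nat).

Definition peel_step r s (ids : {fset nat}) (nb : nat -> option node_state) :=
  if (layer s == None) && (#|` [fset k in ids | unpeeled_state (nb k)] | <= t)
  then NodeState (Some r) (parents s) (colour s) (mate s) else s.

Definition parents_step x s (ids : {fset nat}) (nb : nat -> option node_state) :=
  NodeState (layer s) (enum_fset [fset k in ids | above x s k (nb k)]) (colour s) (mate s).

Definition parent_colour s (nb : nat -> option node_state) j :=
  if parent_at s j is Some p then omap (colour^~ j) (nb p) else None.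

Definition cv_step s (nb : nat -> option node_state) :=
  let c j := if parent_colour s nb j is Some b then cv_recolour fuel (colour s j) b
             else odd (colour s j) in
  NodeState (layer s) (parents s) c (mate s).

Definition accept_step q x s (ids : {fset nat}) (nb : nat -> option node_state) :=
  if mate s is None then
    (if enum_fset [fset k in ids | proposes x (q %% t) (q %/ t) (nb k)] is k :: _
     then NodeState (layer s) (parents s) (colour s) (Some k) else s)
  else s.

Definition confirm_step q x s (nb : nat -> option node_state) :=
  if (mate s == None) && (colour s (q %% t) == q %/ t) then
    (if parent_at s (q %% t) is Some p then
       (if nb p is Some sp then
          (if mate sp == Some x then NodeState (layer s) (parents s) (colour s) (Some p)
           else s)
        else s)
     else s)
  else s.

(* Rounds [0, l) peel, round [l] computes the parents, the next two rounds
   recolour, and then each phase [q] takes two rounds, in which the unmatched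
   children of colour [q %/ t] propose to their [q %% t]-th parent. *)
Definition mm_step r x s ids nb :=
  if r < l then peel_step r s ids nb else if r == l then parents_step x s ids nb
  else if r < l + 3 then cv_step s nb
  else if odd (r - (l + 3)) then confirm_step (r - (l + 3))./2 x s nb
  else accept_step (r - (l + 3))./2 x s ids nb.

Definition mm_init (x : nat) := NodeState None [::] (fun _ => x) None.
End Algorithm.

Section GraphNeighbours.
Local Open Scope fset_scope.
Variables (V : finType) (e : rel V) (idf : V -> nat).
Hypothesis idf_inj : injective idf.

Definition gnbr_ids u := nbr_ids idf (graph_nbrs e) u.
Definition gnbr_state (state : V -> node_state) u := nbr_state idf (graph_nbrs e) state u.

Lemma gnbr_idsP u k : reflect (exists2 w, e u w & idf w = k) (k \in gnbr_ids u).
Proof.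
apply: (iffP (imfsetP _ _ _ _)) => /= [[w]|[w euw <-]].
  by rewrite /graph_nbrs mem_filter mem_enum andbT => euw ->; exists w.
by exists w => //; rewrite /graph_nbrs mem_filter mem_enum andbT.
Qed.

Lemma gnbr_state_nbr state u w : e u w -> gnbr_state state u (idf w) = Some (state w).
Proof.
move=> euw; rewrite /gnbr_state /nbr_state.
case E: (ohead _) => [x|] /=.
  by move/ohead_filter_some: E => /andP[_ /eqP /idf_inj ->].
move/ohead_filter_none: E => /hasP []; exists w; rewrite ?eqxx //.
by rewrite /graph_nbrs mem_filter mem_enum andbT.
Qed.

Lemma gnbr_state_some state u k s : gnbr_state state u k = Some s ->
  exists w, [/\ e u w, idf w = k & s = state w].
Proof.
rewrite /gnbr_state /nbr_state; case E: (ohead _) => [x|] //= [<-].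
move/ohead_filter_some: E => /andP[]; rewrite /graph_nbrs mem_filter mem_enum andbT.
by move=> ? /eqP ?; exists x.
Qed.

Lemma card_gnbr_ids u (P : pred nat) :
  #|` [fset k in gnbr_ids u | P k] | = #|[set w | e u w & P (idf w)]|.
Proof.
have -> : [fset k in gnbr_ids u | P k] = [fset idf w | w in [set w | e u w & P (idf w)]].
  apply/fsetP => k; rewrite !inE; apply/andP/imfsetP => /= [[/gnbr_idsP [w euw <-] Pk]|[w]].
    by exists w => //; rewrite inE euw.
  by rewrite inE => /andP[euw Pw] ->; split=> //; apply/gnbr_idsP; exists w.
by rewrite card_imfset //= -cardE.
Qed.
End GraphNeighbours.

Section Schedule.
Variables (t l fuel : nat).

Lemma mm_step_peel r x s ids nb : r < l ->
  mm_step t l fuel r x s ids nb = peel_step t r s ids nb.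
Proof. by rewrite /mm_step => ->. Qed.
Lemma mm_step_parents x s ids nb : mm_step t l fuel l x s ids nb = parents_step x s ids nb.
Proof. by rewrite /mm_step ltnn eqxx. Qed.
Lemma mm_step_cv r x s ids nb : l < r < l + 3 ->
  mm_step t l fuel r x s ids nb = cv_step fuel s nb.
Proof.
case/andP => h1 h2; rewrite /mm_step h2 ifF ?ifF //.
  by apply/eqP; lia.
by apply/negbTE; rewrite -leqNgt; lia.
Qed.
Lemma mm_step_accept q x s ids nb :
  mm_step t l fuel (l + 3 + q.*2) x s ids nb = accept_step t q x s ids nb.
Proof.
rewrite /mm_step ifF; last by apply/negbTE; rewrite -leqNgt; lia.
rewrite ifF; last by apply/eqP; lia.
rewrite ifF; last by apply/negbTE; rewrite -leqNgt; lia.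
by rewrite addKn odd_double doubleK.
Qed.
Lemma mm_step_confirm q x s ids nb :
  mm_step t l fuel (l + 3 + q.*2).+1 x s ids nb = confirm_step t q x s nb.
Proof.
rewrite /mm_step ifF; last by apply/negbTE; rewrite -leqNgt; lia.
rewrite ifF; last by apply/eqP; lia.
rewrite ifF; last by apply/negbTE; rewrite -leqNgt; lia.
by rewrite -addnS addKn /= odd_double /= uphalf_double.
Qed.
End Schedule.

Section Execution.
Variables (V : finType) (e : rel V) (idf : V -> nat).
Hypothesis e_sym : symmetric e.
Hypothesis e_irr : irreflexive e.
Hypothesis e_acyclic : forall s : seq V, uniq s -> 2 < size s -> ~~ cycle e s.
Hypothesis idf_inj : injective idf.
Variables (t l fuel h : nat).
Hypothesis thr_exp : t.+1 = 2 ^ h.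
Hypothesis h_ge2 : 2 <= h.
Hypothesis card_lt : #|V| < 2 ^ ((h - 1) * l).

Definition state r := run mm_init (mm_step t l fuel) idf (graph_nbrs e) r.

Lemma stateS r u : state r.+1 u =
  mm_step t l fuel r (idf u) (state r u) (gnbr_ids e idf u) (gnbr_state e idf (state r) u).
Proof. by []. Qed.

Lemma late_roundP r : l + 3 <= r -> exists q, r = l + 3 + q.*2 \/ r = (l + 3 + q.*2).+1.
Proof.
move=> r3; exists (r - (l + 3))./2; case: (boolP (odd (r - (l+3)))) => o; [right|left].
  rewrite -[in LHS](subnKC r3) -[r - _](odd_double_half) o; lia.
rewrite -[in LHS](subnKC r3) -[r - _](odd_double_half) (negbTE o); lia.
Qed.

Lemma late_round_fixes r u : l + 3 <= r ->
  [/\ layer (state r.+1 u) = layer (state r u), parents (state r.+1 u) = parents (state r u)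
    & colour (state r.+1 u) = colour (state r u)].
Proof.
move=> r3; rewrite stateS.
case: (late_roundP r3) => q [->|->]; [rewrite mm_step_accept|rewrite mm_step_confirm].
  rewrite /accept_step; case: (mate _) => // ; case: (enum_fset _) => //.
rewrite /confirm_step; case: ifP => // _; case: (parent_at _ _) => // p.
case: (gnbr_state _ _ _ _ _) => // sp.
by case: ifP.
Qed.

Lemma mate_early r u : r < l + 3 -> mate (state r.+1 u) = mate (state r u).
Proof.
move=> r3; rewrite stateS; case: (ltngtP r l) => [rl|lr|->]; last by rewrite mm_step_parents.
  by rewrite mm_step_peel //= /peel_step; case: ifP.
by rewrite mm_step_cv ?lr.
Qed.

Lemma colour_early r u : r <= l -> colour (state r.+1 u) = colour (state r u).
Proof.
move=> rl; rewrite stateS.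
case: (ltngtP r l) rl => // [rl|->] _; last by rewrite mm_step_parents.
by rewrite mm_step_peel //= /peel_step; case: ifP.
Qed.

Lemma parents_stable r u : r != l -> parents (state r.+1 u) = parents (state r u).
Proof.
move=> rnl; case: (leqP (l + 3) r) => r3; first by case: (late_round_fixes u r3).
rewrite stateS; case: (ltngtP r l) rnl => // [rl|lr] _.
  by rewrite mm_step_peel //= /peel_step; case: ifP.
by rewrite mm_step_cv ?lr.
Qed.

Lemma layer_late r u : l <= r -> layer (state r.+1 u) = layer (state r u).
Proof.
move=> lr; case: (leqP (l + 3) r) => r3; first by case: (late_round_fixes u r3).
rewrite stateS; case: (ltngtP r l) lr => // [lr|->] _; last by rewrite mm_step_parents.
by rewrite mm_step_cv ?lr.
Qed.

Lemma mate_stable r u k : mate (state r u) = Some k -> mate (state r.+1 u) = Some k.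
Proof.
move=> mk; case: (ltnP r (l + 3)) => r3; first by rewrite mate_early.
rewrite stateS; case: (late_roundP r3) => q [Eq|Eq]; rewrite Eq.
  by rewrite mm_step_accept -Eq /accept_step mk.
by rewrite mm_step_confirm -Eq /confirm_step mk.
Qed.

Lemma mate_mono r r' u k : r <= r' -> mate (state r u) = Some k -> mate (state r' u) = Some k.
Proof. by move/subnK <-; elim: (r' - r) => //= m IH /IH; apply: mate_stable. Qed.

Definition unpeeled r := [set w | layer (state r w) == None].

Lemma card_unpeeled_nbrs r u :
  #|` [fset k in gnbr_ids e idf u | unpeeled_state (gnbr_state e idf (state r) u k)] |%fset
  = deg e (unpeeled r) u.
Proof.
rewrite (@card_gnbr_ids V e idf idf_inj u) /deg; apply: eq_card => w; rewrite !inE.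
case euw : (e u w); last by rewrite andbF.
by rewrite gnbr_state_nbr //= andbT.
Qed.

Lemma layer_step r u : r < l -> layer (state r.+1 u) =
  if (layer (state r u) == None) && (deg e (unpeeled r) u <= t) then Some r
  else layer (state r u).
Proof.
by move=> rl; rewrite stateS mm_step_peel // /peel_step -card_unpeeled_nbrs; case: ifP.
Qed.

Lemma layer_stable r u i : layer (state r u) = Some i -> layer (state r.+1 u) = Some i.
Proof.
move=> H; case: (ltnP r l) => rl; last by rewrite layer_late.
by rewrite layer_step // H.
Qed.

Lemma layer_mono r r' u i : r <= r' ->
  layer (state r u) = Some i -> layer (state r' u) = Some i.
Proof. by move/subnK <-; elim: (r' - r) => //= m IH /IH; apply: layer_stable. Qed.

Lemma layer_someP r u i : layer (state r u) = Some i ->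
  [/\ i < r, i < l, layer (state i u) = None & layer (state i.+1 u) = Some i].
Proof.
elim: r => [//|r IH].
case: (ltnP r l) => rl; last first.
  by rewrite layer_late // => /IH [*]; split=> //; apply: ltnW.
rewrite layer_step //; case: ifP => [/andP[/eqP Hn Hd] [<-]|_ /IH [*]].
  by split=> //; rewrite layer_step // Hn eqxx Hd.
by split=> //; apply: ltnW.
Qed.

Lemma unpeeled_next r : r < l ->
  unpeeled r.+1 = [set x in unpeeled r | t < deg e (unpeeled r) x].
Proof.
move=> rl; apply/setP => x; rewrite !inE layer_step //.
case: (layer (state r x)) => [i|] //=.
by case: ifP => //; rewrite ltnNge => ->.
Qed.

Lemma card_unpeeled r : r <= l -> #|unpeeled r| * 2 ^ ((h - 1) * r) <= #|V|.
Proof.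
elim: r => [_|r IH rl].
  by rewrite muln0 expn0 muln1; apply: max_card.
apply: leq_trans (IH (ltnW rl)).
have H := card_high_deg e_sym e_irr e_acyclic (unpeeled r) t.
rewrite -unpeeled_next // thr_exp in H.
have E : 2 ^ h = 2 * 2 ^ (h - 1) by rewrite -expnS; congr (_ ^ _); lia.
rewrite E mulnA [_ * 2]mulnC -mulnA leq_pmul2l // in H.
rewrite mulnS expnD mulnA; apply: leq_mul => //.
Qed.

Lemma peeled_all u : exists i, layer (state l u) = Some i.
Proof.
case E: (layer (state l u)) => [i|]; first by exists i.
have unpeeled_gt0 : 0 < #|unpeeled l| by apply/card_gt0P; exists u; rewrite inE E.
have := leq_trans (leq_pmull _ unpeeled_gt0) (card_unpeeled (leqnn l)).
by rewrite leqNgt card_lt.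
Qed.

Definition lvl u := odflt 0 (layer (state l u)).

Lemma lvlP u : layer (state l u) = Some (lvl u).
Proof. by rewrite /lvl; case: (peeled_all u) => i ->. Qed.

Lemma lvl_lt u : lvl u < l.
Proof. by case: (layer_someP (lvlP u)). Qed.

Lemma unpeeled_lvl w i : i <= lvl w -> layer (state i w) = None.
Proof.
move=> iL; case E: (layer (state i w)) => [j|] //.
have [ji _ _ _] := layer_someP E.
have := layer_mono (leq_trans iL (ltnW (lvl_lt w))) E.
by rewrite lvlP => -[jL]; move: ji; rewrite -jL ltnNge iL.
Qed.

Lemma card_upper_nbrs u : #|[set w | e u w & lvl u <= lvl w]| <= t.
Proof.
have [_ il Hi Hi1] := layer_someP (lvlP u).
move: Hi1; rewrite layer_step // Hi eqxx /=; case: ifP => // dt _.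
apply: leq_trans dt; apply: subset_leq_card; apply/subsetP => w.
by rewrite !inE => /andP[euw /unpeeled_lvl ->]; rewrite euw.
Qed.

Definition is_parent u w := e u w && key_lt (lvl u) (idf u) (lvl w) (idf w).

Definition parent_ids u : {fset nat} :=
  [fset k in gnbr_ids e idf u |
     above (idf u) (state l u) k (gnbr_state e idf (state l) u k)]%fset.

Lemma parents_init u : parents (state l.+1 u) = parent_ids u.
Proof. by rewrite stateS mm_step_parents. Qed.

Lemma parents_late r u : l < r -> parents (state r u) = parent_ids u.
Proof.
elim: r => // r IH; rewrite ltnS leq_eqVlt => /orP[/eqP <-|lr]; first exact: parents_init.
by rewrite parents_stable ?IH // neq_ltn lr orbT.
Qed.

Lemma above_nbr u w : e u w ->
  above (idf u) (state l u) (idf w) (gnbr_state e idf (state l) u (idf w)) =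
  key_lt (lvl u) (idf u) (lvl w) (idf w).
Proof. by move=> euw; rewrite gnbr_state_nbr //= /lvl. Qed.

Lemma parent_idsP u k : reflect (exists2 w, is_parent u w & idf w = k) (k \in parent_ids u).
Proof.
rewrite !inE; apply: (iffP andP) => [[/gnbr_idsP [w euw <-]]|[w /andP[euw kl] <-]].
  by rewrite above_nbr // => kl; exists w; rewrite /is_parent ?euw.
by rewrite above_nbr // kl; split=> //; apply/gnbr_idsP; exists w.
Qed.

Lemma size_parent_ids u : size (parent_ids u) <= t.
Proof.
rewrite /parent_ids (@card_gnbr_ids V e idf idf_inj u).
apply: leq_trans (card_upper_nbrs u); apply: subset_leq_card; apply/subsetP => w.
rewrite !inE => /andP[euw]; rewrite gnbr_state_nbr //= euw /= /key_lt /lvl.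
by case/orP => [/ltnW|/andP[/eqP -> _]].
Qed.

Definition parent_j u j := parent_at (state l.+1 u) j.

Lemma parent_at_late r u j : l < r -> parent_at (state r u) j = parent_j u j.
Proof. by move=> lr; rewrite /parent_j /parent_at parents_late // parents_init. Qed.

Lemma parent_jP u j k : parent_j u j = Some k -> j < t /\ exists2 w, is_parent u w & idf w = k.
Proof.
rewrite /parent_j /parent_at parents_init; case: ifP => // jl [<-]; split.
  exact: leq_trans jl (size_parent_ids u).
by apply/parent_idsP; apply: mem_nth.
Qed.

Lemma is_parent_j u w : is_parent u w -> exists2 j, j < t & parent_j u j = Some (idf w).
Proof.
move=> pw; have wm : idf w \in parent_ids u by apply/parent_idsP; exists w.
exists (index (idf w) (parent_ids u)).
  by apply: leq_trans (size_parent_ids u); rewrite index_mem.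
by rewrite /parent_j /parent_at parents_init index_mem wm nth_index.
Qed.

Lemma parent_orient u w : e u w -> is_parent u w \/ is_parent w u.
Proof.
move=> euw; rewrite /is_parent euw (e_sym w u) euw /= /key_lt.
have : idf u != idf w by apply/eqP => /idf_inj uw; move: euw; rewrite uw e_irr.
case: (ltngtP (lvl u) (lvl w)) => _ /=; try by [left|right].
by case: (ltngtP (idf u) (idf w)) => //= _ _; [left|right].
Qed.

Lemma colour_init r u : r <= l.+1 -> colour (state r u) = fun _ => idf u.
Proof.
elim: r => [_|r IH rl]; first by [].
have rl' : r <= l by rewrite -ltnS.
rewrite (colour_early u rl'); exact: (IH (ltnW rl)).
Qed.

Lemma colourS r u j : l < r < l + 3 ->
  colour (state r.+1 u) j = if parent_j u j is Some p then
     (if gnbr_state e idf (state r) u p is Some sp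
      then cv_recolour fuel (colour (state r u) j) (colour sp j)
      else odd (colour (state r u) j))
   else odd (colour (state r u) j).
Proof.
move=> rr; rewrite stateS mm_step_cv //= /parent_colour parent_at_late; last by case/andP: rr.
by case: (parent_j u j) => // p; case: (gnbr_state _ _ _ _ _).
Qed.

Lemma colourS_parent r u w j : l < r < l + 3 -> is_parent u w -> parent_j u j = Some (idf w) ->
  colour (state r.+1 u) j = cv_recolour fuel (colour (state r u) j) (colour (state r w) j).
Proof.
by move=> rr /andP[euw _] pu; rewrite colourS // pu gnbr_state_nbr.
Qed.

Lemma colourS_form r w j : l < r < l + 3 ->
  exists i, colour (state r.+1 w) j = 2 * i + bit i (colour (state r w) j).
Proof.
move=> rr; rewrite colourS //.
case: (parent_j w j) => [p|]; last by exists 0; rewrite muln0.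
case: (gnbr_state _ _ _ _ _) => [sp|]; last by exists 0; rewrite muln0.
by exists (diff_bit fuel (colour (state r w) j) (colour sp j)).
Qed.

Definition proper_colour r := forall u w j, is_parent u w -> parent_j u j = Some (idf w) ->
  colour (state r u) j != colour (state r w) j.
Definition colour_lt r k := forall u j, colour (state r u) j < 2 ^ k.

Lemma proper_colour_step r k : l < r < l + 3 -> k <= fuel ->
  proper_colour r -> colour_lt r k -> proper_colour r.+1.
Proof.
move=> rr kf pr bd u w j pw pu.
rewrite (colourS_parent rr pw pu); have [i ->] := colourS_form w j rr.
by apply: (@cv_recolour_neq fuel k); [exact: kf|exact: bd|exact: bd|exact: pr].
Qed.

Lemma colour_lt_step r k : l < r < l + 3 -> k <= fuel -> 0 < k ->
  proper_colour r -> colour_lt r k ->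
  forall u j, colour (state r.+1 u) j < 2 * k.
Proof.
move=> rr kf k0 pr bd u j.
case E: (parent_j u j) => [p|]; last by rewrite colourS // E; case: (odd _) => /=; lia.
have [_ [w pw wp]] := parent_jP E; rewrite -wp in E.
by rewrite (colourS_parent rr pw E); apply: cv_recolour_lt; rewrite ?bd ?pr.
Qed.

Variables (Bid Bcol : nat).
Hypothesis idf_lt : forall u, idf u < 2 ^ Bid.
Hypothesis Bid_fuel : Bid <= fuel.
Hypothesis Bcol_fuel : Bcol <= fuel.
Hypothesis Bid_Bcol : 2 * Bid <= 2 ^ Bcol.
Hypothesis Bid_gt0 : 0 < Bid.

Lemma Bcol_gt0 : 0 < Bcol.
Proof. by case: Bcol Bid_Bcol => //; rewrite expn0; lia. Qed.

Lemma proper_colour1 : proper_colour l.+1.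
Proof.
move=> u w j /andP[euw _] _; rewrite !colour_init //.
by apply/eqP => /idf_inj uw; move: euw; rewrite uw e_irr.
Qed.

Lemma colour_lt1 : colour_lt l.+1 Bid.
Proof. by move=> u j; rewrite colour_init. Qed.

Lemma proper_colour2 : proper_colour l.+2.
Proof.
apply: (@proper_colour_step _ Bid) => //;
  [lia|exact: proper_colour1|exact: colour_lt1].
Qed.

Lemma colour_lt2 : colour_lt l.+2 Bcol.
Proof.
move=> u j; apply: leq_trans Bid_Bcol.
apply: (@colour_lt_step l.+1 Bid) => //; [lia|exact: proper_colour1|exact: colour_lt1].
Qed.

Lemma proper_colour3 : proper_colour (l + 3).
Proof.
rewrite addn3; apply: (@proper_colour_step _ Bcol) => //;
  [lia|exact: proper_colour2|exact: colour_lt2].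
Qed.

Lemma colour_lt3 u j : colour (state (l + 3) u) j < 2 * Bcol.
Proof.
rewrite addn3; apply: (@colour_lt_step l.+2 Bcol) => //;
  [lia|exact: Bcol_gt0|exact: proper_colour2|exact: colour_lt2].
Qed.

Definition fcol u j := colour (state (l + 3) u) j.

Lemma colour_late r u : l + 3 <= r -> colour (state r u) = colour (state (l + 3) u).
Proof.
move/subnK <-; elim: (r - (l + 3)) => // m IH.
by rewrite addSn; case: (late_round_fixes u (leq_addl m (l + 3))) => _ _ ->.
Qed.

Definition phase q := l + 3 + q.*2.
Definition proposers q u := [fset k in gnbr_ids e idf u |
   proposes (idf u) (q %% t) (q %/ t) (gnbr_state e idf (state (phase q)) u k)]%fset.

Lemma mate_accept q u : mate (state (phase q).+1 u) =
  if mate (state (phase q) u) is Some k then Some k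
  else (if enum_fset (proposers q u) is k :: _ then Some k else None).
Proof.
rewrite stateS /phase mm_step_accept /accept_step.
case E: (mate (state (l + 3 + q.*2) u)) => [k|] /=; first by rewrite E.
by rewrite /proposers /phase; destruct (enum_fset _).
Qed.

Lemma proposersP q u k : k \in proposers q u -> exists w, [/\ e u w, idf w = k,
  mate (state (phase q) w) = None, parent_j w (q %% t) = Some (idf u)
  & fcol w (q %% t) = q %/ t].
Proof.
rewrite /proposers !inE => /andP[/gnbr_idsP [w euw <-]]; rewrite gnbr_state_nbr //=.
rewrite parent_at_late /fcol ?colour_late ?/phase; [|lia|lia].
by case/and3P => /eqP m /eqP p /eqP c; exists w.
Qed.

Lemma proposersI q u w : e u w -> mate (state (phase q) w) = None ->
  parent_j w (q %% t) = Some (idf u) ->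
  fcol w (q %% t) = q %/ t -> idf w \in proposers q u.
Proof.
move=> euw m p c; rewrite /proposers !inE; apply/andP; split.
  by apply/gnbr_idsP; exists w.
rewrite gnbr_state_nbr //= parent_at_late ?colour_late ?/phase; [|lia|lia].
by rewrite m p -/(fcol w (q %% t)) c !eqxx.
Qed.

Lemma mate_confirm q u : mate (state (phase q).+2 u) =
  if mate (state (phase q).+1 u) is Some k then Some k
  else if fcol u (q %% t) == q %/ t then
    (if parent_j u (q %% t) is Some p then
       (if gnbr_state e idf (state (phase q).+1) u p is Some sp then
          (if mate sp == Some (idf u) then Some p else None) else None) else None)
  else None.
Proof.
rewrite stateS /phase mm_step_confirm /confirm_step colour_late ?parent_at_late; [|lia|lia].
case E: (mate (state (l + 3 + q.*2).+1 u)) => [k|] /=; first by rewrite E.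
rewrite -/(fcol u (q %% t)); case: ifP => _; last by rewrite E.
case: (parent_j u (q %% t)) => [p|]; last by rewrite E.
case: (gnbr_state e idf (state (l + 3 + q.*2).+1) u p) => [sp|]; last by rewrite E.
by case: ifP => _; rewrite ?E.
Qed.

Definition mate_sym r := forall u k, mate (state r u) = Some k ->
  exists w, [/\ e u w, idf w = k & mate (state r w) = Some (idf u)].

Lemma parent_j_is_parent u j w : parent_j u j = Some (idf w) -> is_parent u w.
Proof. by case/parent_jP => _ [w' pw' /idf_inj <-]. Qed.

Lemma fcol_parent_neq u w j : parent_j u j = Some (idf w) -> fcol u j != fcol w j.
Proof. by move=> p; exact: (proper_colour3 (parent_j_is_parent p) p). Qed.

Lemma enum_head (A : {fset nat}) k s : enum_fset A = k :: s -> k \in A.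
Proof. by move=> E; have : k \in (enum_fset A : seq nat) by rewrite E; exact: mem_head. Qed.

(* A node accepting in phase [q] has a child of colour [q %/ t] in the same
   pseudoforest, so by properness it does not itself propose in phase [q]. *)
Lemma accept_fcol_neq q u k :
  mate (state (phase q) u) = None -> mate (state (phase q).+1 u) = Some k ->
  fcol u (q %% t) != q %/ t.
Proof.
rewrite mate_accept => ->; case E: (enum_fset (proposers q u)) => [//|k' s] _.
have [w [euw wk mw pw cw]] := proposersP (enum_head E).
by rewrite -cw eq_sym; apply: fcol_parent_neq.
Qed.

Lemma mate_sym_phase q : mate_sym (phase q) -> mate_sym (phase q).+2.
Proof.
move=> I u k; rewrite mate_confirm.
case E1: (mate (state (phase q).+1 u)) => [k1|].
  move=> [<-]; case E0: (mate (state (phase q) u)) => [k0|].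
    have E' := mate_stable E0; rewrite E1 in E'; case: E' => ->.
    have [w [euw wk mw]] := I _ _ E0; exists w; split=> //.
    by apply: (mate_mono _ mw); lia.
  move: E1; rewrite mate_accept E0; case E: (enum_fset (proposers q u)) => [//|k' s] [<-].
  have [w [euw wk mw pw cw]] := proposersP (enum_head E).
  exists w; split=> //.
  have mw1 : mate (state (phase q).+1 w) = None.
    case E2: (mate (state (phase q).+1 w)) => [z|] //.
    by move: (accept_fcol_neq mw E2); rewrite cw eqxx.
  rewrite mate_confirm mw1 cw eqxx pw gnbr_state_nbr ?(e_sym w u) //.
  have : mate (state (phase q).+1 u) = Some (idf w).
    by rewrite mate_accept E0 E wk.
  by move=> ->; rewrite eqxx.
case: ifP => // /eqP cu; case E2: (parent_j u (q %% t)) => [p|] //.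
case E3: (gnbr_state e idf (state (phase q).+1) u p) => [sp|] //.
case: ifP => // /eqP ms [<-].
have [w [euw wp Esp]] := gnbr_state_some E3; rewrite Esp in ms.
by exists w; split=> //; apply: mate_stable.
Qed.

Lemma phase_covers q u w : parent_j u (q %% t) = Some (idf w) -> fcol u (q %% t) = q %/ t ->
  mate (state (phase q).+2 u) != None \/ mate (state (phase q).+2 w) != None.
Proof.
move=> p c.
case Eu: (mate (state (phase q) u)) => [ku|].
  by left; rewrite (mate_mono (k:=ku) (r := phase q)) //; lia.
case Ew: (mate (state (phase q) w)) => [kw|].
  by right; rewrite (mate_mono (k:=kw) (r := phase q)) //; lia.
right.
have euw : e u w by case/andP: (parent_j_is_parent p).
have ewu : e w u by rewrite e_sym.
have H := proposersI ewu Eu p c.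
move: (erefl (mate (state (phase q).+1 w))); rewrite {2}mate_accept Ew.
case E: (enum_fset (proposers q w)) => [|k s].
  by move: H; rewrite -[idf u \in _]/(idf u \in enum_fset _) E.
move=> E1; by rewrite (mate_stable E1).
Qed.

Lemma phaseS q : phase q.+1 = (phase q).+2.
Proof. by rewrite /phase doubleS !addnS. Qed.

Lemma mate_sym_all q : mate_sym (phase q).
Proof.
elim: q => [|q IH]; last by rewrite phaseS; apply: mate_sym_phase.
have E : forall r u, r <= l + 3 -> mate (state r u) = None.
  elim=> [//|r IHr] u r3; rewrite mate_early //; exact: IHr (ltnW r3).
by move=> u k; rewrite E // /phase double0 addn0.
Qed.

Lemma covered_after q u w j : parent_j u j = Some (idf w) -> fcol u j * t + j < q ->
  mate (state (phase q) u) != None \/ mate (state (phase q) w) != None.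
Proof.
move=> p; have [jt _] := parent_jP p.
elim: q => [//|q IH]; rewrite ltnS leq_eqVlt => /orP[/eqP Eq|lt].
  have Hj : q %% t = j by rewrite -Eq modnMDl modn_small.
  have Hc : q %/ t = fcol u j by rewrite -Eq divnMDl ?divn_small ?addn0 //; lia.
  by rewrite phaseS; apply: phase_covers; rewrite Hj // Hc.
have mono x : mate (state (phase q) x) != None -> mate (state (phase q.+1) x) != None.
  case E: (mate _) => [k|] // _; by rewrite (mate_mono (k:=k) (r:=phase q)) // /phase; lia.
by case: (IH lt) => H; [left|right]; apply: mono.
Qed.

Definition mm_out u := mate (state (phase (t * (2 * Bcol))) u).

Lemma covered u w : e u w -> mm_out u != None \/ mm_out w != None.
Proof.
move=> euw; wlog pw : u w euw / is_parent u w.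
  move=> H; case: (parent_orient euw) => p; first exact: H.
  by case: (H w u) => //; [rewrite e_sym|right|left].
have [j jt p] := is_parent_j pw.
apply: (covered_after p).
have := colour_lt3 u j; rewrite -/(fcol u j) => cb.
apply: (@leq_trans ((fcol u j).+1 * t)); first by rewrite mulSn; lia.
by rewrite mulnC leq_mul2l cb orbT.
Qed.

Lemma mm_out_solves : solves_maximal_matching e idf mm_out.
Proof. apply: solves_maximal_matchingP idf_inj _ covered; exact: mate_sym_all. Qed.
End Execution.

(** * Round complexity *)

Definition lg n := trunc_log 2 n.
Definition lglg n := lg (lg n).
Definition thr_log n := maxn 2 (lglg n)./2.
Definition thr n := 2 ^ thr_log n - 1.
Definition nlayers n := (lg n).+1 %/ (thr_log n - 1) + 1.
Definition id_bits c n := c * (lg n).+1.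
Definition colour_bits c n := (trunc_log 2 (2 * id_bits c n)).+1.
Definition cv_fuel c n := id_bits c n + colour_bits c n.
Definition rounds c n := nlayers n + 3 + (thr n * (2 * colour_bits c n)).*2.

Lemma thr_log_ge2 n : 2 <= thr_log n.
Proof. exact: leq_maxl. Qed.

Lemma sqS_le_exp2 h : (h + 1) * (h + 1) <= 4 * 2 ^ h.
Proof.
elim: h => [//|h IH]; rewrite expnS.
by case: (leqP h 1) => hh; [case: h hh IH => [|[|]] | nia].
Qed.

Lemma trunc_log2_le m : trunc_log 2 m <= m.
Proof.
case: m => [|m]; first by rewrite /trunc_log.
exact: leq_trans (ltnW (ltn_expl _ (ltnSn 1))) (trunc_logP (ltnSn 1) (ltn0Sn m)).
Qed.

Lemma colour_bits_le c n : 0 < c -> colour_bits c n <= lglg n + c + 3.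
Proof.
move=> c0; rewrite /colour_bits.
have hL : lg n < 2 ^ (lglg n).+1 by apply: trunc_log_ltn.
have hc : c < 2 ^ c by apply: ltn_expl.
have lt_pow : 2 * id_bits c n < 2 ^ (lglg n + c + 2).
  rewrite /id_bits !expnD; have : (lg n).+1 <= 2 ^ (lglg n).+1 by [].
  by rewrite expnS; nia.
have pos : 0 < 2 * id_bits c n by rewrite /id_bits; nia.
have := leq_ltn_trans (trunc_logP (leqnn 2) pos) lt_pow.
by rewrite ltn_exp2l //; lia.
Qed.

Section LargeN.
Variables (n : nat).
Hypothesis n_large : 2 ^ 16 <= n.

Lemma thr_log_spec : [/\ (thr_log n).*2 <= lglg n, lglg n <= (thr_log n).*2.+1
  & 2 ^ thr_log n * 2 ^ thr_log n <= lg n].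
Proof.
have L16 : 16 <= lg n by apply: trunc_log_max.
have LL4 : 4 <= lglg n by apply: trunc_log_max.
have LLL : 2 ^ lglg n <= lg n by apply: trunc_logP; lia.
have hE : thr_log n = (lglg n)./2 by apply/maxn_idPr; lia.
have oh := odd_double_half (lglg n); rewrite -hE in oh.
have ob : (odd (lglg n) : nat) <= 1 by case: odd.
split; [lia|lia|].
by rewrite -expnD; apply: leq_trans LLL; rewrite leq_exp2l //; lia.
Qed.

Lemma nlayers_lglg : nlayers n * lglg n <= 10 * lg n.
Proof.
have [hLL LLh _] := thr_log_spec; have h2 := thr_log_ge2 n.
have L16 : 16 <= lg n by apply: trunc_log_max.
have LLL : lglg n < 2 ^ lglg n by apply: ltn_expl.
have LLL' : 2 ^ lglg n <= lg n by apply: trunc_logP; lia.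
have lb : nlayers n * (thr_log n - 1) <= lg n + thr_log n.
  by rewrite /nlayers mulnDl mul1n; have := leq_divM (lg n).+1 (thr_log n - 1); lia.
apply: (@leq_trans (nlayers n * (5 * (thr_log n - 1)))).
  by rewrite leq_mul2l; apply/orP; right; lia.
by rewrite mulnCA; move: lb; set X := nlayers n * _; lia.
Qed.

Lemma phases_lglg c : 0 < c ->
  (thr n * (2 * colour_bits c n)).*2 * lglg n <= 64 * (c + 4) * lg n.
Proof.
move=> c0; have [hLL LLh a2] := thr_log_spec; have h2 := thr_log_ge2 n.
have B2 := colour_bits_le n c0.
set h := thr_log n in h2 hLL LLh a2 B2; set a := 2 ^ h in a2.
have ta : thr n < a by rewrite /thr -/h /a; have := expn_gt0 2 h; lia.
have pe := sqS_le_exp2 h; rewrite -/a in pe.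
have poly_le : (2 * h + c + 4) * (2 * h + 1) <= 16 * (c + 4) * a.
  apply: (@leq_trans (4 * (c + 4) * ((h + 1) * (h + 1)))); first by nia.
  apply: (@leq_trans (4 * (c + 4) * (4 * a))); first by rewrite leq_mul2l pe orbT.
  by nia.
rewrite -muln2.
apply: (@leq_trans (4 * a * ((2 * h + c + 4) * (2 * h + 1)))).
  have -> : 4 * a * ((2 * h + c + 4) * (2 * h + 1))
          = a * (2 * (2 * h + c + 4)) * 2 * (2 * h + 1) by nia.
  by apply: leq_mul; [apply: leq_mul => //; apply: leq_mul; lia | lia].
apply: leq_trans (leq_mul (leqnn _) poly_le) _.
have -> : 4 * a * (16 * (c + 4) * a) = 64 * (c + 4) * (a * a) by nia.
by rewrite leq_mul2l a2 orbT.
Qed.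
End LargeN.

Lemma rounds_bound c : 0 < c -> forall n, 2 ^ 16 <= n ->
  rounds c n * trunc_log 2 (trunc_log 2 n) <= (13 + 64 * (c + 4)) * trunc_log 2 n.
Proof.
move=> c0 n nN; rewrite -/(lg n) -/(lg (lg n)) -/(lglg n).
have := nlayers_lglg nN; have := phases_lglg nN c0.
have := trunc_log2_le (lg n); rewrite -/(lg (lg n)) -/(lglg n) /rounds.
set a := nlayers n; set b := (thr n * _).*2; set m := lglg n; set L := lg n.
lia.
Qed.

Lemma thrS n : (thr n).+1 = 2 ^ thr_log n.
Proof. by rewrite /thr subn1 prednK ?expn_gt0. Qed.

Lemma lt_exp_layers n : n < 2 ^ ((thr_log n - 1) * nlayers n).
Proof.
apply: leq_trans (trunc_log_ltn n (ltnSn 1)) _; rewrite leq_exp2l // /nlayers addn1 mulnC.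
by apply/ltnW/ltn_ceil; have := thr_log_ge2 n; lia.
Qed.

Lemma exp_lt_id_bits c n : 0 < c -> n ^ c < 2 ^ id_bits c n.
Proof. by move=> c0; rewrite /id_bits mulnC expnM ltn_exp2r // trunc_log_ltn. Qed.

Lemma id_colour_bits c n : 2 * id_bits c n <= 2 ^ colour_bits c n.
Proof. exact/ltnW/trunc_log_ltn. Qed.

Lemma id_bits_gt0 c n : 0 < c -> 0 < id_bits c n.
Proof. by move=> c0; rewrite /id_bits muln_gt0 c0. Qed.

Theorem mainTheorem4 :
  forall c : nat, 1 <= c ->
  exists (A : nat -> view -> option nat) (T : nat -> nat) (K N0 : nat),
    (forall n, N0 <= n ->
       T n * trunc_log 2 (trunc_log 2 n) <= K * trunc_log 2 n) /\
    (forall (n : nat) (e : rel 'I_n) (idf : 'I_n -> nat),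
       is_tree e -> valid_ids n c idf ->
       solves_maximal_matching e idf (local_output e idf n (T n) A)).
Proof.
move=> c c_gt0.
pose A n (vw : view) := mate (run mm_init (mm_step (thr n) (nlayers n) (cv_fuel c n))
                                  id (view_nbrs vw.2) (rounds c n) vw.1.1).
exists A, (rounds c), (13 + 64 * (c + 4)), (2 ^ 16); split; first exact: rounds_bound.
move=> n e idf [[e_sym e_irr] [_ e_acyclic]] [idf_inj id_range].
have id_lt u : idf u < 2 ^ id_bits c n.
  by apply: leq_ltn_trans (exp_lt_id_bits n c_gt0); case/andP: (id_range u).
have card_lt : #|'I_n| < 2 ^ ((thr_log n - 1) * nlayers n).
  by rewrite card_ord; exact: lt_exp_layers.
have := mm_out_solves e_sym e_irr e_acyclic idf_inj (thrS n) (thr_log_ge2 n) card_lt id_lt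
  (leq_addr _ _) (leq_addl _ _) (id_colour_bits c n) (id_bits_gt0 n c_gt0).
congr solves_maximal_matching; apply: functional_extensionality => v.
by rewrite /local_output /A run_view_of.
Qed.
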